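(* If a persistence module $\mathbb{V}$ contains a nonzero right-closed point, then $\mathbb{V}$ is not locally compact.
   Context: A persistence module is a functor $\mathbb{V}$ from the poset $[0,\infty)$ to $\mathbb{Q}$-vector spaces. An element $v_r\in\mathbb{V}(r)$ is a right-closed point if $\mathbb{V}(r\le r+\epsilon)(v_r)=0$ for all $\epsilon>0$. A persistence module is compact if it is a compact object of the category of persistence modules (equivalently a finite direct sum of interval modules $\mathbb{I}_{[s,t)}$, where $\mathbb{I}_{[s,t)}$ is $\mathbb{Q}$ on $[s,t)$ with identity structure maps and $0$ elsewhere). $\mathbb{V}$ is locally compact if every element $v\in\mathbb{V}(r)$ lies in some compact submodule of $\mathbb{V}$. *)

From Stdlib Require Import Reals.
From HB Require Import structures.
From mathcomp Require Import all_boot all_order all_algebra.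
Set Implicit Arguments. Unset Strict Implicit. Unset Printing Implicit Defensive.
Import GRing.Theory.
Local Open Scope ring_scope.

(* Reals are used only through function names (Rle, Rlt, Rplus, R0) to avoid
   notation clashes with ring_scope. *)

(* A persistence module: data of Q-vector spaces V(r) and maps V(r<=s).
   Only indices 0 <= r <= s matter; axioms are in [is_pmod]. *)
Record pmod := PMod {
  pm_sp :> R -> lmodType rat ;
  pm_map : forall r s : R, pm_sp r -> pm_sp s }.
Arguments pm_map : clear implicits.

Definition lin_map (U W : lmodType rat) (f : U -> W) : Prop :=
  forall (a : rat) (x y : U), f (a *: x + y) = a *: f x + f y.

Definition is_pmod (V : pmod) : Prop :=
  (forall r s, Rle R0 r -> Rle r s -> lin_map (pm_map V r s)) /\
  (forall r, Rle R0 r -> forall x : V r, pm_map V r r x = x) /\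
  (forall r s t, Rle R0 r -> Rle r s -> Rle s t ->
     forall x : V r, pm_map V s t (pm_map V r s x) = pm_map V r t x).

Definition pmorph (V W : pmod) (f : forall r, V r -> W r) : Prop :=
  (forall r, Rle R0 r -> lin_map (f r)) /\
  (forall r s, Rle R0 r -> Rle r s ->
     forall x : V r, f s (pm_map V r s x) = pm_map W r s (f r x)).

Definition pmono (V W : pmod) (f : forall r, V r -> W r) : Prop :=
  pmorph f /\ (forall r, Rle R0 r -> injective (f r)).

(* membership of r in [s, t), t = None meaning t = +oo *)
Definition in_itv (s : R) (t : option R) (r : R) : bool :=
  (if Rle_dec s r then true else false) &&
  (match t with None => true | Some t' => if Rlt_dec r t' then true else false end).

Definition lt_end (s : R) (t : option R) : Prop :=
  match t with None => True | Some t' => Rlt s t' end.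

(* The interval module I_[s,t): Q (as 'rV_1) on [s,t), 0 (as 'rV_0) elsewhere,
   identity maps inside the interval, zero otherwise. *)
Definition Imod (s : R) (t : option R) : pmod :=
  @PMod (fun r => 'rV[rat]_(in_itv s t r) : lmodType rat)
        (fun r r' x => const_mx (\sum_(j < in_itv s t r) x 0 j)).

(* W is compact: W is isomorphic to a finite direct sum of interval modules
   I_[s_i,t_i) (0 <= s_i < t_i <= +oo), i.e. there are morphisms
   f_i : I_[s_i,t_i) -> W exhibiting W (pointwise) as the direct sum. *)
Definition is_compact (W : pmod) : Prop :=
  exists (n : nat) (s : 'I_n -> R) (t : 'I_n -> option R)
         (f : forall (i : 'I_n) (r : R), Imod (s i) (t i) r -> W r),
    (forall i, Rle R0 (s i) /\ lt_end (s i) (t i)) /\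
    (forall i, pmorph (f i)) /\
    (forall r, Rle R0 r ->
       (forall w : W r, exists x : (forall i, Imod (s i) (t i) r),
           w = \sum_(i < n) f i r (x i)) /\
       (forall x : (forall i, Imod (s i) (t i) r),
           \sum_(i < n) f i r (x i) = 0 -> forall i, x i = 0)).

Definition right_closed (V : pmod) (r : R) (v : V r) : Prop :=
  forall eps, Rlt R0 eps -> pm_map V r (Rplus r eps) v = 0.

(* locally compact: every element lies in a compact submodule
   (a submodule = subobject, given by a monomorphism W >-> V). *)
Definition locally_compact (V : pmod) : Prop :=
  forall r, Rle R0 r -> forall v : V r,
    exists (W : pmod) (j : forall r', W r' -> V r'),
      is_pmod W /\ pmono j /\ is_compact W /\ exists w : W r, j r w = v.

From Pilot Require Import Defs.
From Stdlib Require Import Reals Lra.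
From mathcomp Require Import all_boot all_order all_algebra.

(* A compact module is a finite sum of intervals [s_i, t_i), each open on the
   right, so for small enough eps > 0 every structure map of a summand alive at
   r is still the identity from r to r + eps; hence the map W(r <= r + eps) is
   injective and W has no nonzero right-closed point. A monomorphism reflects
   right-closedness, so a nonzero right-closed v in V cannot lie in a compact
   submodule. *)

Set Implicit Arguments.
Unset Strict Implicit.

Import GRing.Theory.
Local Open Scope ring_scope.

Section LinMap.
Variables (U W : lmodType rat) (f : U -> W).
Hypothesis flin : lin_map f.

Lemma lin_mapD x y : f (x + y) = f x + f y.
Proof. by rewrite -{1}[x]scale1r flin scale1r. Qed.

Lemma lin_map0 : f 0 = 0.
Proof. by apply: (addrI (f 0)); rewrite -lin_mapD !addr0. Qed.

Lemma lin_map_sum n (g : 'I_n -> U) : f (\sum_(i < n) g i) = \sum_(i < n) f (g i).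
Proof.
elim: n g => [|n IHn] g; first by rewrite !big_ord0 lin_map0.
by rewrite !big_ord_recr /= lin_mapD IHn.
Qed.

End LinMap.

Lemma uniform_pos_radius (I : finType) (P : I -> R -> Prop) :
    (forall i, exists e, Rlt R0 e /\ forall e', Rlt R0 e' -> Rle e' e -> P i e') ->
  exists e, Rlt R0 e /\ forall i, P i e.
Proof.
move=> radius.
suff [e [e_gt0 eP]] : exists e, Rlt R0 e /\
    forall i, i \in enum I -> forall e', Rlt R0 e' -> Rle e' e -> P i e'.
  by exists e; split=> // i; apply: eP; rewrite ?mem_enum //; lra.
elim: (enum I) => [|i l [e [e_gt0 eP]]]; first by exists R1; split; [lra|].
have [ei [ei_gt0 eiP]] := radius i.
exists (Rmin e ei); split; first exact: Rmin_pos.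
move=> k; rewrite in_cons => /orP[/eqP-> | kl] e' e'_gt0 le_e'.
- by apply: eiP => //; apply: Rle_trans le_e' (Rmin_r _ _).
- by apply: eP => //; apply: Rle_trans le_e' (Rmin_l _ _).
Qed.

Lemma in_itvP s t x : Defs.in_itv s t x <->
  Rle s x /\ match t with None => True | Some t' => Rlt x t' end.
Proof.
rewrite /Defs.in_itv; case: (Rle_dec s x) => sx; case: t => [t'|] /=;
  try case: (Rlt_dec x t') => xt /=; split; by [|case].
Qed.

Lemma in_itv_right_open s t r : exists eps, Rlt R0 eps /\
  forall e, Rlt R0 e -> Rle e eps -> Defs.in_itv s t r -> Defs.in_itv s t (Rplus r e).
Proof.
case: t => [t'|]; last first.
  exists R1; split; first lra.
  by move=> e e_gt0 _ /in_itvP[sr _]; apply/in_itvP; split=> //; lra.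
case: (Rlt_dec r t') => r_t'.
- exists (Rdiv (Rminus t' r) 2); split; first lra.
  by move=> e e_gt0 le_e /in_itvP[sr _]; apply/in_itvP; split; lra.
- by exists R1; split=> [|e _ _ /in_itvP[_ ?]]; lra.
Qed.

(* The structure map of [Imod s t] from [r] to [r'], with [b], [b'] the
   memberships of [r], [r'] in [s, t). *)
Lemma const_sum_mx_eq0 (b b' : bool) (x : 'rV[rat]_b) : (b -> b') ->
  (const_mx (\sum_(j < b) x 0 j) : 'rV[rat]_b') = 0 -> x = 0.
Proof.
case: b x => x; last by move=> _ _; apply/rowP => -[].
case: b' => [_ /rowP/(_ ord0)|/(_ isT)//].
rewrite !mxE big_ord1 => x0; apply/rowP => k.
by rewrite (ord1 k) mxE -x0; congr (x _ _); apply: val_inj.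
Qed.

Lemma compact_right_closed_eq0 (W : pmod) (r : R) (w : W r) :
  is_pmod W -> is_compact W -> Rle R0 r -> right_closed w -> w = 0.
Proof.
move=> [Wlin _] [n [s [t [f [_ [fmorph fdec]]]]]] r_ge0 w_rc.
have [eps [eps_gt0 alive]] := uniform_pos_radius (P := fun i e =>
  Defs.in_itv (s i) (t i) r -> Defs.in_itv (s i) (t i) (Rplus r e))
  (fun i => in_itv_right_open (s i) (t i) r).
have r_le : Rle r (Rplus r eps) by lra.
have reps_ge0 : Rle R0 (Rplus r eps) by lra.
have [x w_sum] := (fdec r r_ge0).1 w.
have moved_sum0 : \sum_(i < n) f i _ (pm_map (Imod (s i) (t i)) r (Rplus r eps) (x i)) = 0.
  rewrite -[RHS](w_rc eps eps_gt0) w_sum (lin_map_sum (Wlin _ _ r_ge0 r_le)).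
  by apply: eq_bigr => i _; rewrite (fmorph i).2.
have x0 i : x i = 0.
  exact: const_sum_mx_eq0 (alive i) ((fdec _ reps_ge0).2 _ moved_sum0 i).
by rewrite w_sum big1 // => i _; rewrite x0 (lin_map0 ((fmorph i).1 r r_ge0)).
Qed.

Lemma pmono_right_closed (V W : pmod) (j : forall r, W r -> V r) (r : R) (w : W r) :
  pmono j -> Rle R0 r -> right_closed (j r w) -> right_closed w.
Proof.
move=> [[jlin jnat] jinj] r_ge0 jw_rc eps eps_gt0.
have reps_ge0 : Rle R0 (Rplus r eps) by lra.
apply: (jinj _ reps_ge0).
rewrite jnat //; last lra.
by rewrite (jw_rc eps eps_gt0) (lin_map0 (jlin _ reps_ge0)).
Qed.

Theorem mainTheorem17 (V : pmod) (HV : is_pmod V) (r : R) (hr : Rle R0 r)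
  (v : V r) (hv : v <> 0%R) (hrc : right_closed v) :
  ~ locally_compact V.
Proof.
move=> V_lc; have [W [j [W_pmod [j_mono [W_compact [w jw]]]]]] := V_lc r hr v.
have w_rc : right_closed w by apply: pmono_right_closed j_mono hr _; rewrite jw.
apply: hv; rewrite -jw (compact_right_closed_eq0 W_pmod W_compact hr w_rc).
exact: lin_map0 (j_mono.1.1 r hr).
Qed.
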